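(* There is an absolute constant $C>0$ such that the following holds. Let $0<\delta\le\frac14$, $0<a<\pi$, $\lambda\ge1$ and $M\ge1$. Let $g$ be a continuous function on the closed unit disk, analytic on its interior, satisfying $|g(\delta)|\ge1$ and, for every $0<\gamma\le1$, $|z|\le1-\gamma\Rightarrow|g(z)|\le\frac{\lambda M}{\gamma}$. Let $\Gamma$ be the circle with center $\delta$ and radius $1-\delta$, and let $J$ be the closed arc of $\Gamma$ with midpoint $1$ and arc length $a$. Then $$\max_{z\in J}|g(z)|\ge\left(\frac{\delta}{\lambda M}\right)^{C/a}.$$
   Context: The paper writes the bound as $(\delta/(\lambda M))^{O(1/a)}$, where $O(\cdot)$ hides an absolute constant. *)

From Stdlib Require Export Reals.
From Coquelicot Require Export Coquelicot.
Open Scope R_scope.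

Definition closed_disk (z : C) : Prop := Cmod z <= 1.

Definition continuous_on_closed_disk (g : C -> C) : Prop :=
  forall z : C, closed_disk z ->
    filterlim g (within closed_disk (locally z)) (locally (g z)).

Definition analytic_on_open_disk (g : C -> C) : Prop :=
  forall z : C, Cmod z < 1 ->
    ex_derive (K := C_AbsRing) (V := C_NormedModule) g z.

Definition Gamma_pt (delta theta : R) : C :=
  (delta + (1 - delta) * cos theta, (1 - delta) * sin theta).

(* J: closed arc of Gamma with midpoint 1 and arc length a.  Arc length a on a
   circle of radius 1 - delta corresponds to the angular interval
   |theta| <= a / (2 (1 - delta)). *)
Definition in_arc_J (delta a : R) (z : C) : Prop :=
  exists theta : R, Rabs theta <= a / (2 * (1 - delta)) /\ z = Gamma_pt delta theta.

From Stdlib Require Import Reals.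
From Coquelicot Require Import Coquelicot.
From Stdlib Require Import Lra Lia ZArith.
From Stdlib Require Import IndefiniteDescription Classical.
Open Scope R_scope.

(* Take [N] slightly above [2 pi / a] and let [P] be the product of the [N] copies of [g]
   rotated about [delta] by the multiples of [2 pi / N].  Then [P] is holomorphic on the disk
   of centre [delta] and radius [1 - delta] and [|P delta| = |g delta| ^ N >= 1].  On a circle
   of centre [delta] just inside [Gamma], one factor is evaluated within [pi / N <= a / 2] of
   the midpoint of [J], hence near [J], while the factor rotated by [2 pi k / N] is evaluated
   at distance about [delta / (N / k * N / (N - k)) ^ 2] from the unit circle; by the growth
   bound these [N - 1] factors have product at most [(3 lambda M / delta) ^ (N - 1) e ^ (4 N)].
   The maximum principle for [P] (proved from Goursat's lemma on polar rectangles) gives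
   [1 <= max_J |g| * (3 lambda M / delta) ^ (N - 1) * e ^ (4 N)], which is impossible when
   [max_J |g| < (delta / (lambda M)) ^ (18 pi / a)]. *)

Record rect := Rect { xlo : R; xhi : R; ylo : R; yhi : R }.

Definition width (q : rect) := xhi q - xlo q.
Definition height (q : rect) := yhi q - ylo q.

Definition subrect (q' q : rect) : Prop :=
  xlo q <= xlo q' /\ xhi q' <= xhi q /\ ylo q <= ylo q' /\ yhi q' <= yhi q.

Definition quarter (q : rect) (right top : bool) : rect :=
  let xm := (xlo q + xhi q) / 2 in
  let ym := (ylo q + yhi q) / 2 in
  Rect (if right then xm else xlo q) (if right then xhi q else xm)
       (if top then ym else ylo q) (if top then yhi q else ym).

Lemma subrect_refl q : subrect q q.
Proof. unfold subrect; lra. Qed.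

Lemma subrect_trans q1 q2 q3 : subrect q1 q2 -> subrect q2 q3 -> subrect q1 q3.
Proof. unfold subrect; lra. Qed.

Lemma quarter_subrect q right top : xlo q <= xhi q -> ylo q <= yhi q ->
  subrect (quarter q right top) q.
Proof. unfold subrect; destruct right, top; simpl; lra. Qed.

Lemma width_quarter q right top : width (quarter q right top) = width q / 2.
Proof. unfold width; destruct right; simpl; lra. Qed.

Lemma height_quarter q right top : height (quarter q right top) = height q / 2.
Proof. unfold height; destruct top; simpl; lra. Qed.

Lemma nested_intervals (lo hi : nat -> R) :
  (forall k, lo k <= lo (S k)) -> (forall k, hi (S k) <= hi k) -> (forall k, lo k <= hi k) ->
  exists x, forall k, lo k <= x <= hi k.
Proof.
  intros Hlo Hhi Hlohi.
  assert (lo_mono : forall j k, (j <= k)%nat -> lo j <= lo k).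
  { intros j k Hjk; induction Hjk; [lra | specialize (Hlo m); lra]. }
  assert (hi_mono : forall j k, (j <= k)%nat -> hi k <= hi j).
  { intros j k Hjk; induction Hjk; [lra | specialize (Hhi m); lra]. }
  assert (lo_hi : forall j k, lo j <= hi k).
  { intros j k. specialize (lo_mono j (max j k) (Nat.le_max_l j k)).
    specialize (hi_mono k (max j k) (Nat.le_max_r j k)).
    specialize (Hlohi (max j k)). lra. }
  destruct (completeness (fun z => exists k, z = lo k)) as [x [Hub Hlub]].
  - exists (hi 0%nat). intros z [k ->]. apply lo_hi.
  - exists (lo 0%nat), 0%nat. reflexivity.
  - exists x. intros k. split.
    + apply Hub. exists k. reflexivity.
    + apply Hlub. intros z [j ->]. apply lo_hi.
Qed.

Lemma exists_div_pow2_le L rho : 0 < rho -> exists k, L / 2 ^ k <= rho.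
Proof.
  intros Hrho.
  destruct (Pow_x_infinity 2 ltac:(rewrite Rabs_pos_eq; lra) (L / rho)) as [k Hk].
  specialize (Hk k (Nat.le_refl k)). rewrite Rabs_pos_eq in Hk by (apply pow_le; lra).
  exists k. assert (0 < 2 ^ k) by (apply pow_lt; lra).
  apply Rmult_le_reg_r with (2 ^ k / rho); [apply Rdiv_lt_0_compat; lra|].
  replace (L / 2 ^ k * (2 ^ k / rho)) with (L / rho) by (field; lra).
  replace (rho * (2 ^ k / rho)) with (2 ^ k) by (field; lra). lra.
Qed.

Section Goursat.

Variable I : rect -> C.
Variable q0 : rect.

Hypothesis I_additive : forall q, subrect q q0 -> xlo q < xhi q -> ylo q < yhi q ->
  I q = (I (quarter q false false) + I (quarter q true false)
         + I (quarter q false true) + I (quarter q true true))%C.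

Hypothesis I_locally_small : forall x y, xlo q0 <= x <= xhi q0 -> ylo q0 <= y <= yhi q0 ->
  forall eta, 0 < eta -> exists rho, 0 < rho /\ forall q, subrect q q0 ->
    xlo q <= x <= xhi q -> ylo q <= y <= yhi q -> width q < rho -> height q < rho ->
    Cmod (I q) <= eta * (width q + height q) ^ 2.

Hypothesis q0_width : xlo q0 < xhi q0.
Hypothesis q0_height : ylo q0 < yhi q0.

Definition pick_quarter (q : rect) : rect :=
  let big q' := Rle_dec (Cmod (I q) / 4) (Cmod (I q')) in
  if big (quarter q false false) then quarter q false false
  else if big (quarter q true false) then quarter q true false
  else if big (quarter q false true) then quarter q false true
  else quarter q true true.

Lemma pick_quarter_is_quarter q : exists right top, pick_quarter q = quarter q right top.
Proof.
  unfold pick_quarter.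
  repeat match goal with |- context [Rle_dec ?u ?v] => destruct (Rle_dec u v) end; eauto.
Qed.

Lemma pick_quarter_large q :
  I q = (I (quarter q false false) + I (quarter q true false)
         + I (quarter q false true) + I (quarter q true true))%C ->
  Cmod (I q) / 4 <= Cmod (I (pick_quarter q)).
Proof.
  intros Hadd. unfold pick_quarter.
  repeat match goal with |- context [Rle_dec ?u ?v] => destruct (Rle_dec u v) end; auto.
  pose proof (Cmod_triangle (I (quarter q false false) + I (quarter q true false)
                             + I (quarter q false true)) (I (quarter q true true))).
  pose proof (Cmod_triangle (I (quarter q false false) + I (quarter q true false))
                            (I (quarter q false true))).
  pose proof (Cmod_triangle (I (quarter q false false)) (I (quarter q true false))).
  rewrite <- Hadd in *. lra.
Qed.

Fixpoint bisection (k : nat) : rect :=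
  match k with O => q0 | S k => pick_quarter (bisection k) end.

Lemma bisection_spec k :
  subrect (bisection k) q0 /\
  width (bisection k) = width q0 / 2 ^ k /\ height (bisection k) = height q0 / 2 ^ k /\
  Cmod (I q0) / 4 ^ k <= Cmod (I (bisection k)).
Proof.
  induction k as [|k (Hsub & Hw & Hh & HI)].
  - simpl. rewrite !Rdiv_1_r. repeat split; try apply subrect_refl; lra.
  - assert (p2 : 0 < 2 ^ k) by (apply pow_lt; lra).
    assert (w_pos : 0 < width (bisection k))
      by (rewrite Hw; apply Rdiv_lt_0_compat; unfold width; lra).
    assert (h_pos : 0 < height (bisection k))
      by (rewrite Hh; apply Rdiv_lt_0_compat; unfold height; lra).
    unfold width, height in w_pos, h_pos.
    assert (HIq := pick_quarter_large (bisection k) ltac:(apply I_additive; auto; lra)).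
    simpl bisection. destruct (pick_quarter_is_quarter (bisection k)) as (right & top & Hq).
    rewrite Hq in HIq |- *. rewrite width_quarter, height_quarter, Hw, Hh. simpl pow.
    split; [|split; [|split]].
    + eapply subrect_trans; [apply quarter_subrect; lra | exact Hsub].
    + field; lra.
    + field; lra.
    + replace (Cmod (I q0) / (4 * 4 ^ k)) with (Cmod (I q0) / 4 ^ k / 4)
        by (field; apply pow_nonzero; lra).
      lra.
Qed.

Lemma bisection_nested k : subrect (bisection (S k)) (bisection k).
Proof.
  destruct (bisection_spec k) as (_ & Hw & Hh & _).
  assert (0 < 2 ^ k) by (apply pow_lt; lra).
  assert (0 < width q0 / 2 ^ k) by (apply Rdiv_lt_0_compat; unfold width; lra).
  assert (0 < height q0 / 2 ^ k) by (apply Rdiv_lt_0_compat; unfold height; lra).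
  simpl. destruct (pick_quarter_is_quarter (bisection k)) as (right & top & ->).
  apply quarter_subrect; unfold width, height in *; lra.
Qed.

Lemma bisection_common_point : exists x y, forall k,
  xlo (bisection k) <= x <= xhi (bisection k) /\ ylo (bisection k) <= y <= yhi (bisection k).
Proof.
  assert (Hsize : forall k, xlo (bisection k) <= xhi (bisection k) /\
                            ylo (bisection k) <= yhi (bisection k)).
  { intro k. destruct (bisection_spec k) as (_ & Hw & Hh & _).
    assert (0 < 2 ^ k) by (apply pow_lt; lra).
    assert (0 < width q0 / 2 ^ k) by (apply Rdiv_lt_0_compat; unfold width; lra).
    assert (0 < height q0 / 2 ^ k) by (apply Rdiv_lt_0_compat; unfold height; lra).
    unfold width, height in *. lra. }
  destruct (nested_intervals (fun k => xlo (bisection k)) (fun k => xhi (bisection k)))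
    as [x Hx]; try (intro k; pose proof (bisection_nested k) as Hk; unfold subrect in Hk; lra).
  { intro k. apply Hsize. }
  destruct (nested_intervals (fun k => ylo (bisection k)) (fun k => yhi (bisection k)))
    as [y Hy]; try (intro k; pose proof (bisection_nested k) as Hk; unfold subrect in Hk; lra).
  { intro k. apply Hsize. }
  exists x, y. auto.
Qed.

(* On the nested rectangles [|I|] decays like [4^-k] but is [o(4^-k)] near their common point. *)
Lemma rect_fun_eq0 : I q0 = 0%C.
Proof.
  destruct bisection_common_point as (x & y & Hxy).
  set (mu := Cmod (I q0)).
  destruct (Req_dec mu 0) as [Hmu | Hmu]; [now apply Cmod_eq_0|].
  exfalso.
  assert (mu_pos : 0 < mu) by (pose proof (Cmod_ge_0 (I q0)); unfold mu in *; lra).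
  set (L := width q0 + height q0).
  assert (L_pos : 0 < L) by (unfold L, width, height; lra).
  destruct (I_locally_small x y) with (eta := mu / (2 * L ^ 2)) as [rho [rho_pos Hrho]];
    [apply (Hxy 0%nat) | apply (Hxy 0%nat) | apply Rdiv_lt_0_compat; nra |].
  destruct (exists_div_pow2_le L rho rho_pos) as [k HL].
  destruct (bisection_spec k) as (Hsub & Hw & Hh & HI).
  assert (p2 : 0 < 2 ^ k) by (apply pow_lt; lra).
  assert (0 < width q0 / 2 ^ k) by (apply Rdiv_lt_0_compat; unfold width; lra).
  assert (0 < height q0 / 2 ^ k) by (apply Rdiv_lt_0_compat; unfold height; lra).
  assert (L / 2 ^ k = width q0 / 2 ^ k + height q0 / 2 ^ k) by (unfold L; field; lra).
  assert (Hsmall : Cmod (I (bisection k)) <= mu / (2 * L ^ 2) * (L / 2 ^ k) ^ 2).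
  { destruct (Hxy k). replace (L / 2 ^ k) with (width (bisection k) + height (bisection k)) by lra.
    apply Hrho; auto; lra. }
  replace (mu / (2 * L ^ 2) * (L / 2 ^ k) ^ 2) with (mu / 4 ^ k / 2) in Hsmall.
  - assert (0 < mu / 4 ^ k) by (apply Rdiv_lt_0_compat; [lra | apply pow_lt; lra]).
    fold mu in HI. lra.
  - replace 4 with (2 ^ 2) by lra. rewrite <- pow_mult, Nat.mul_comm, pow_mult.
    field; lra.
Qed.

End Goursat.

Definition cis (t : R) : C := (cos t, sin t).
Definition polar (c : C) (r t : R) : C := (c + RtoC r * cis t)%C.

Lemma Cmod_le_of_sqr (z : C) (B : R) : 0 <= B -> Re z ^ 2 + Im z ^ 2 <= B ^ 2 -> Cmod z <= B.
Proof.
  intros HB H. rewrite <- Cmod2_alt in H. pose proof (Cmod_ge_0 z).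
  destruct (Rle_dec (Cmod z) B); auto. nra.
Qed.

Lemma Cmod_cis t : Cmod (cis t) = 1.
Proof.
  unfold cis, Cmod; simpl. rewrite !Rmult_1_r, <- sqrt_1. f_equal.
  pose proof (sin2_cos2 t). unfold Rsqr in *. lra.
Qed.

Lemma Rabs_sin_le u : Rabs (sin u) <= Rabs u.
Proof.
  assert (Hpos : forall v, 0 <= v -> Rabs (sin v) <= v).
  { intros v Hv. destruct (Req_dec v 0) as [-> | Hv0]; [rewrite sin_0, Rabs_R0; lra|].
    pose proof (sin_lt_x v ltac:(lra)). pose proof (SIN_bound v).
    destruct (Rle_dec v 1).
    - assert (0 <= sin v) by (apply sin_ge_0; pose proof PI2_3_2; lra).
      rewrite Rabs_pos_eq; lra.
    - apply Rabs_le; lra. }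
  destruct (Rle_dec 0 u).
  - rewrite (Rabs_pos_eq u) by lra. auto.
  - rewrite (Rabs_left u), <- Rabs_Ropp, <- sin_neg by lra. apply Hpos. lra.
Qed.

Lemma Cmod_cis_sub t s : Cmod (cis t - cis s) <= Rabs (t - s).
Proof.
  apply Cmod_le_of_sqr; [apply Rabs_pos|]. rewrite pow2_abs.
  replace (Re (cis t - cis s) ^ 2 + Im (cis t - cis s) ^ 2) with (4 * sin ((t - s) / 2) ^ 2).
  - assert (sin ((t - s) / 2) ^ 2 <= ((t - s) / 2) ^ 2).
    { rewrite <- (pow2_abs (sin _)), <- (pow2_abs ((t - s) / 2)).
      apply pow_incr. split; [apply Rabs_pos | apply Rabs_sin_le]. }
    replace ((t - s) ^ 2) with (4 * ((t - s) / 2) ^ 2) by field. lra.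
  - replace (4 * sin ((t - s) / 2) ^ 2) with (2 - 2 * cos (2 * ((t - s) / 2)))
      by (rewrite cos_2a_sin; ring).
    replace (2 * ((t - s) / 2)) with (t - s) by field. rewrite cos_minus.
    unfold cis; simpl. pose proof (sin2_cos2 t). pose proof (sin2_cos2 s).
    unfold Rsqr in *. nra.
Qed.

Lemma Cmod_polar_sub_radius c r r' t : Cmod (polar c r t - polar c r' t) = Rabs (r - r').
Proof.
  replace (polar c r t - polar c r' t)%C with (RtoC (r - r') * cis t)%C.
  - rewrite Cmod_mult, Cmod_cis, Cmod_R. ring.
  - unfold polar, cis, RtoC. apply injective_projections; simpl; ring.
Qed.

Lemma Cmod_polar_sub_angle_le c r t t' :
  Cmod (polar c r t - polar c r t') <= Rabs r * Rabs (t - t').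
Proof.
  replace (polar c r t - polar c r t')%C with (RtoC r * (cis t - cis t'))%C.
  - rewrite Cmod_mult, Cmod_R. apply Rmult_le_compat_l; [apply Rabs_pos | apply Cmod_cis_sub].
  - unfold polar, cis, RtoC. apply injective_projections; simpl; ring.
Qed.

Lemma Cmod_polar_sub_center c r t : Cmod (polar c r t - c) = Rabs r.
Proof.
  replace (polar c r t - c)%C with (RtoC r * cis t)%C.
  - rewrite Cmod_mult, Cmod_cis, Cmod_R. ring.
  - unfold polar, cis, RtoC. apply injective_projections; simpl; ring.
Qed.

Lemma polar_add_2PI c r t : polar c r (t + 2 * PI) = polar c r t.
Proof.
  unfold polar, cis. rewrite cos_plus, sin_plus, cos_2PI, sin_2PI.
  do 2 f_equal. apply injective_projections; simpl; ring.
Qed.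

Lemma Cmod_polar_sub_polar_le c r t x y : 0 <= x ->
  Cmod (polar c r t - polar c x y) <= Rabs (r - x) + x * Rabs (t - y).
Proof.
  intros Hx.
  replace (polar c r t - polar c x y)%C
    with ((polar c r t - polar c x t) + (polar c x t - polar c x y))%C by ring.
  eapply Rle_trans; [apply Cmod_triangle|]. rewrite Cmod_polar_sub_radius.
  pose proof (Cmod_polar_sub_angle_le c x t y). rewrite (Rabs_pos_eq x) in H by lra. lra.
Qed.

Lemma Cmod_polar_sub_polar_rect_le c q r t x y Rr : 0 <= x <= Rr ->
  xlo q <= r <= xhi q -> ylo q <= t <= yhi q -> xlo q <= x <= xhi q -> ylo q <= y <= yhi q ->
  Cmod (polar c r t - polar c x y) <= (1 + Rr) * (width q + height q).
Proof.
  intros Hx Hr Ht Hqx Hqy. eapply Rle_trans; [apply Cmod_polar_sub_polar_le; lra|].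
  assert (Rabs (r - x) <= width q) by (apply Rabs_le; unfold width; lra).
  assert (Rabs (t - y) <= height q) by (apply Rabs_le; unfold height; lra).
  assert (x * Rabs (t - y) <= Rr * height q) by (apply Rmult_le_compat; try lra; apply Rabs_pos).
  unfold width, height in *. nra.
Qed.

Definition Ccont_at (F : C -> C) (w : C) : Prop :=
  forall eta, 0 < eta -> exists rho, 0 < rho /\
    forall z, Cmod (z - w) < rho -> Cmod (F z - F w) < eta.

Definition Cdiff_at (F : C -> C) (w : C) : Prop :=
  exists l : C, forall eta, 0 < eta -> exists rho, 0 < rho /\
    forall z, Cmod (z - w) < rho -> Cmod (F z - F w - l * (z - w)) <= eta * Cmod (z - w).

Lemma Cdiff_at_cont F w : Cdiff_at F w -> Ccont_at F w.
Proof.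
  intros [l Hl] eta He. destruct (Hl 1 ltac:(lra)) as [rho [Hr Hz]].
  pose proof (Cmod_ge_0 l).
  exists (Rmin rho (eta / (Cmod l + 2))). split.
  { apply Rmin_pos; auto. apply Rdiv_lt_0_compat; lra. }
  intros z Hzw. pose proof (Rmin_l rho (eta / (Cmod l + 2))).
  pose proof (Rmin_r rho (eta / (Cmod l + 2))). pose proof (Cmod_ge_0 (z - w)).
  specialize (Hz z ltac:(lra)).
  replace (F z - F w)%C with ((F z - F w - l * (z - w)) + l * (z - w))%C by ring.
  eapply Rle_lt_trans; [apply Cmod_triangle|]. rewrite Cmod_mult.
  assert (Cmod (z - w) * (Cmod l + 2) < eta).
  { apply Rmult_lt_reg_r with (/ (Cmod l + 2)); [apply Rinv_0_lt_compat; lra|].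
    rewrite Rmult_assoc, Rinv_r by lra. unfold Rdiv in *. lra. }
  nra.
Qed.

Lemma Ccont_at_minus F G w : Ccont_at F w -> Ccont_at G w -> Ccont_at (fun z => F z - G z)%C w.
Proof.
  intros HF HG eta He.
  destruct (HF (eta / 2) ltac:(lra)) as [r1 [h1 H1]].
  destruct (HG (eta / 2) ltac:(lra)) as [r2 [h2 H2]].
  exists (Rmin r1 r2). split; [apply Rmin_pos; auto|]. intros z Hz.
  specialize (H1 z (Rlt_le_trans _ _ _ Hz (Rmin_l _ _))).
  specialize (H2 z (Rlt_le_trans _ _ _ Hz (Rmin_r _ _))).
  replace (F z - G z - (F w - G w))%C with ((F z - F w) + - (G z - G w))%C by ring.
  eapply Rle_lt_trans; [apply Cmod_triangle|]. rewrite Cmod_opp. lra.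
Qed.

Lemma Cdiff_at_affine (w0 l w : C) z : Cdiff_at (fun x => (w0 + l * (x - w))%C) z.
Proof.
  exists l. intros eta He. exists 1. split; [lra|]. intros y _.
  replace ((w0 + l * (y - w)) - (w0 + l * (z - w)) - l * (y - z))%C with (RtoC 0) by ring.
  rewrite Cmod_0. pose proof (Cmod_ge_0 (y - z)). nra.
Qed.

Lemma continuous_RC_intro (h : R -> C) (x : R) :
  (forall eta, 0 < eta -> exists rho, 0 < rho /\
     forall y, Rabs (y - x) < rho -> Cmod (h y - h x) < eta) ->
  @continuous R_UniformSpace C_R_CompleteNormedModule h x.
Proof.
  intros H. apply (filterlim_locally (F := locally x)). intros eps.
  destruct (H eps (cond_pos eps)) as [rho [Hr Hy]].
  exists (mkposreal rho Hr). intros y Hb. specialize (Hy y Hb).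
  pose proof (Rmax_Cmod (h y - h x)%C) as Hmax.
  pose proof (Rmax_l (Rabs (fst (h y - h x)%C)) (Rabs (snd (h y - h x)%C))).
  pose proof (Rmax_r (Rabs (fst (h y - h x)%C)) (Rabs (snd (h y - h x)%C))).
  split; simpl; unfold ball; simpl; unfold AbsRing_ball, abs, minus, plus, opp; simpl in *; lra.
Qed.

Lemma continuous_polar_angle F c r t : Ccont_at F (polar c r t) ->
  @continuous R_UniformSpace C_R_CompleteNormedModule (fun s => F (polar c r s)) t.
Proof.
  intros HF. apply continuous_RC_intro. intros eta He.
  destruct (HF eta He) as [rho [Hr Hz]]. pose proof (Rabs_pos r).
  exists (rho / (Rabs r + 1)). split; [apply Rdiv_lt_0_compat; lra|].
  intros y Hy. apply Hz. eapply Rle_lt_trans; [apply Cmod_polar_sub_angle_le|].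
  apply Rle_lt_trans with ((Rabs r + 1) * Rabs (y - t)).
  - pose proof (Rabs_pos (y - t)). nra.
  - apply Rmult_lt_reg_r with (/ (Rabs r + 1)); [apply Rinv_0_lt_compat; lra|].
    replace ((Rabs r + 1) * Rabs (y - t) * / (Rabs r + 1)) with (Rabs (y - t)) by (field; lra).
    exact Hy.
Qed.

Lemma continuous_polar_radius F c r t : Ccont_at F (polar c r t) ->
  @continuous R_UniformSpace C_R_CompleteNormedModule (fun s => F (polar c s t)) r.
Proof.
  intros HF. apply continuous_RC_intro. intros eta He.
  destruct (HF eta He) as [rho [Hr Hz]].
  exists rho. split; auto. intros y Hy. apply Hz. rewrite Cmod_polar_sub_radius. auto.
Qed.

Notation CInt f a b := (RInt (V := C_R_CompleteNormedModule) f a b).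
Notation ex_CInt f a b := (ex_RInt (V := C_R_CompleteNormedModule) f a b).

Lemma ex_CInt_arc F c r a b : (forall t, Ccont_at F (polar c r t)) ->
  ex_CInt (fun t => F (polar c r t)) a b.
Proof. intros H. apply ex_RInt_continuous. intros. apply continuous_polar_angle. auto. Qed.

Lemma ex_CInt_radial F c t a b : 0 < a -> a <= b ->
  (forall r, a <= r <= b -> Ccont_at F (polar c r t)) ->
  ex_CInt (fun r => scal (/ r) (F (polar c r t))) a b.
Proof.
  intros Ha Hab H. apply ex_RInt_continuous. intros z Hz.
  rewrite Rmin_left, Rmax_right in Hz by lra.
  apply (continuous_scal (fun r => / r) (fun r => F (polar c r t))).
  - apply continuous_Rinv. lra.
  - apply continuous_polar_radius, H. lra.
Qed.

Lemma scal_C_R (s : R) (z : C) : @scal _ C_R_ModuleSpace s z = (RtoC s * z)%C.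
Proof.
  destruct z. unfold RtoC. apply injective_projections; simpl; unfold scal; simpl;
    unfold mult; simpl; ring.
Qed.

Lemma CInt_Chasles (f : R -> C) a m b : ex_CInt f a m -> ex_CInt f m b ->
  CInt f a b = (CInt f a m + CInt f m b)%C.
Proof.
  intros H1 H2. exact (eq_sym (RInt_Chasles (V := C_R_CompleteNormedModule) f a m b H1 H2)).
Qed.

Lemma CInt_minus (f g : R -> C) a b : ex_CInt f a b -> ex_CInt g a b ->
  CInt (fun x => f x - g x)%C a b = (CInt f a b - CInt g a b)%C.
Proof. intros H1 H2. exact (RInt_minus (V := C_R_CompleteNormedModule) f g a b H1 H2). Qed.

Lemma Cmod_CInt_le (f : R -> C) a b B : a <= b -> ex_CInt f a b ->
  (forall x, a <= x <= b -> Cmod (f x) <= B) -> Cmod (CInt f a b) <= (b - a) * B.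
Proof.
  intros Hab Hex Hb.
  assert (norm_Cmod : forall x : C, @norm _ C_R_NormedModule x = Cmod x).
  { intros [x1 x2]. unfold norm; simpl. unfold prod_norm, norm, abs, Cmod; simpl.
    rewrite !Rmult_1_r, <- !Rabs_mult, !Rabs_right; try reflexivity; nra. }
  rewrite <- norm_Cmod.
  apply (norm_RInt_le (V := C_R_CompleteNormedModule) f (fun _ => B) a b _ _ Hab).
  - intros x Hx. rewrite norm_Cmod. auto.
  - apply RInt_correct. auto.
  - apply (is_RInt_const a b B).
Qed.

Lemma is_CInt_cis (K : C) c d :
  is_RInt (V := C_R_CompleteNormedModule) (fun t => (K * cis t)%C) c d
          (- Ci * K * (cis d - cis c))%C.
Proof.
  destruct K as [k1 k2].
  replace (- Ci * (k1, k2) * (cis d - cis c))%C with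
    ((k1 * sin d + k2 * cos d) - (k1 * sin c + k2 * cos c),
     (- k1 * cos d + k2 * sin d) - (- k1 * cos c + k2 * sin c))
    by (unfold cis, Ci; apply injective_projections; simpl; ring).
  apply (is_RInt_ext (V := C_R_CompleteNormedModule)
           (fun t => (k1 * cos t - k2 * sin t, k1 * sin t + k2 * cos t))).
  { intros x _. unfold cis. apply injective_projections; simpl; ring. }
  apply (is_RInt_fct_extend_pair (U := R_NormedModule) (V := R_NormedModule)); simpl.
  - apply (is_RInt_derive (V := R_CompleteNormedModule) (fun t => k1 * sin t + k2 * cos t)).
    + intros x _. auto_derive; auto. ring.
    + intros x _. apply (ex_derive_continuous (K := R_AbsRing) (V := R_NormedModule)).
      auto_derive. auto.
  - apply (is_RInt_derive (V := R_CompleteNormedModule) (fun t => - k1 * cos t + k2 * sin t)).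
    + intros x _. auto_derive; auto. ring.
    + intros x _. apply (ex_derive_continuous (K := R_AbsRing) (V := R_NormedModule)).
      auto_derive. auto.
Qed.

Definition radial_int (F : C -> C) (c : C) (t a b : R) : C :=
  CInt (fun r => scal (/ r) (F (polar c r t))) a b.
Definition arc_int (F : C -> C) (c : C) (r t1 t2 : R) : C :=
  CInt (fun t => F (polar c r t)) t1 t2.

Lemma radial_int_Chasles F c t a m b : 0 < a -> a <= m <= b ->
  (forall r, a <= r <= b -> Ccont_at F (polar c r t)) ->
  radial_int F c t a b = (radial_int F c t a m + radial_int F c t m b)%C.
Proof.
  intros Ha Hm HC. apply CInt_Chasles; apply ex_CInt_radial; try lra; intros; apply HC; lra.
Qed.

Lemma arc_int_Chasles F c r t1 t2 t3 : (forall t, Ccont_at F (polar c r t)) ->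
  arc_int F c r t1 t3 = (arc_int F c r t1 t2 + arc_int F c r t2 t3)%C.
Proof. intros HC. apply CInt_Chasles; apply ex_CInt_arc; auto. Qed.

Lemma radial_int_minus F G c t a b : 0 < a -> a <= b ->
  (forall r, a <= r <= b -> Ccont_at F (polar c r t) /\ Ccont_at G (polar c r t)) ->
  radial_int (fun z => F z - G z)%C c t a b = (radial_int F c t a b - radial_int G c t a b)%C.
Proof.
  intros Ha Hab HC. unfold radial_int.
  rewrite <- CInt_minus by (apply ex_CInt_radial; try lra; intros; apply HC; lra).
  apply (RInt_ext (V := C_R_CompleteNormedModule)). intros x _. rewrite !scal_C_R.
  change (@eq C ((/ x)%R * (F (polar c x t) - G (polar c x t)))
                ((/ x)%R * F (polar c x t) - (/ x)%R * G (polar c x t)))%C. ring.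
Qed.

Lemma arc_int_minus F G c r t1 t2 :
  (forall t, Ccont_at F (polar c r t) /\ Ccont_at G (polar c r t)) ->
  arc_int (fun z => F z - G z)%C c r t1 t2 = (arc_int F c r t1 t2 - arc_int G c r t1 t2)%C.
Proof. intros HC. apply CInt_minus; apply ex_CInt_arc; intro t; apply HC. Qed.

(* The contour integral of [F z / (z - c)] along the positively oriented boundary of the
   polar rectangle [{c + r e^(i t) | xlo q <= r <= xhi q, ylo q <= t <= yhi q}]. *)
Definition polar_rect_int (F : C -> C) (c : C) (q : rect) : C :=
  (radial_int F c (ylo q) (xlo q) (xhi q) - radial_int F c (yhi q) (xlo q) (xhi q)
   + Ci * (arc_int F c (xhi q) (ylo q) (yhi q) - arc_int F c (xlo q) (ylo q) (yhi q)))%C.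

Lemma polar_rect_int_affine (w0 l w c : C) q : 0 < xlo q <= xhi q ->
  polar_rect_int (fun x => w0 + l * (x - w))%C c q = 0%C.
Proof.
  destruct q as [a b t1 t2]; cbn [xlo xhi ylo yhi]. intros Hab.
  set (FA := fun x => (w0 + l * (x - w))%C).
  assert (HC : forall z, Ccont_at FA z) by (intro; apply Cdiff_at_cont, Cdiff_at_affine).
  unfold polar_rect_int, radial_int, arc_int; cbn [xlo xhi ylo yhi].
  rewrite <- (CInt_minus (fun r => scal (/ r) (FA (polar c r t1))))
    by (apply ex_CInt_radial; auto; lra).
  rewrite <- (CInt_minus (fun t => FA (polar c b t))) by (apply ex_CInt_arc; auto).
  rewrite (RInt_ext (V := C_R_CompleteNormedModule) _ (fun _ => (l * (cis t1 - cis t2))%C)).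
  2: { intros x Hx. rewrite Rmin_left, Rmax_right in Hx by lra.
       unfold FA, polar, cis, scal; simpl. unfold mult; simpl.
       apply injective_projections; simpl; unfold scal; simpl; unfold mult; simpl;
         field; lra. }
  rewrite RInt_const.
  rewrite (RInt_ext (V := C_R_CompleteNormedModule) _ (fun t => ((l * RtoC (b - a)) * cis t)%C)).
  2: { intros x _. unfold FA, polar. ring_simplify.
       unfold RtoC. apply injective_projections; simpl; ring. }
  rewrite (is_RInt_unique _ _ _ _ (is_CInt_cis (l * RtoC (b - a)) t1 t2)), scal_C_R.
  destruct l. unfold cis, Ci, RtoC. apply injective_projections; simpl; ring.
Qed.

Lemma polar_rect_int_minus F G c q : 0 < xlo q <= xhi q ->
  (forall r t, xlo q <= r <= xhi q -> Ccont_at F (polar c r t) /\ Ccont_at G (polar c r t)) ->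
  polar_rect_int (fun z => F z - G z)%C c q = (polar_rect_int F c q - polar_rect_int G c q)%C.
Proof.
  intros Hq HC. unfold polar_rect_int.
  rewrite !(radial_int_minus F G), !(arc_int_minus F G) by (try intro; try apply HC; lra).
  ring.
Qed.

Lemma polar_rect_int_bound E c q K : 0 < xlo q <= xhi q -> ylo q <= yhi q ->
  (forall r t, xlo q <= r <= xhi q -> Ccont_at E (polar c r t)) ->
  (forall r t, xlo q <= r <= xhi q -> ylo q <= t <= yhi q -> Cmod (E (polar c r t)) <= K) ->
  Cmod (polar_rect_int E c q) <= 2 * (width q + height q) * (1 + / xlo q) * K.
Proof.
  destruct q as [a b t1 t2]; unfold width, height; cbn [xlo xhi ylo yhi]. intros Hab Ht HC HK.
  assert (K_nonneg : 0 <= K)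
    by (pose proof (Cmod_ge_0 (E (polar c a t1))); specialize (HK a t1); lra).
  assert (inv_a : 0 < / a) by (apply Rinv_0_lt_compat; lra).
  assert (Hradial : forall t, t1 <= t <= t2 -> Cmod (radial_int E c t a b) <= (b - a) * (/ a * K)).
  { intros t Htt. apply Cmod_CInt_le; [lra | apply ex_CInt_radial; auto; lra |].
    intros x Hx. rewrite scal_C_R, Cmod_mult, Cmod_R, Rabs_pos_eq
      by (apply Rlt_le, Rinv_0_lt_compat; lra).
    assert (/ x <= / a) by (apply Rinv_le_contravar; lra).
    assert (0 < / x) by (apply Rinv_0_lt_compat; lra).
    specialize (HK x t Hx Htt). pose proof (Cmod_ge_0 (E (polar c x t))). nra. }
  assert (Harc : forall r, a <= r <= b -> Cmod (arc_int E c r t1 t2) <= (t2 - t1) * K).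
  { intros r Hr. apply Cmod_CInt_le; [lra | apply ex_CInt_arc; auto | auto]. }
  pose proof (Hradial t1 ltac:(lra)). pose proof (Hradial t2 ltac:(lra)).
  pose proof (Harc a ltac:(lra)). pose proof (Harc b ltac:(lra)).
  unfold polar_rect_int; cbn [xlo xhi ylo yhi].
  eapply Rle_trans; [apply Cmod_triangle|]. rewrite Cmod_mult, Cmod_Ci.
  pose proof (Cmod_triangle (radial_int E c t1 a b) (- radial_int E c t2 a b)).
  pose proof (Cmod_triangle (arc_int E c b t1 t2) (- arc_int E c a t1 t2)).
  assert ((b - a) * (/ a * K) <= (b - a) * ((1 + / a) * K)) by (apply Rmult_le_compat_l; nra).
  assert ((t2 - t1) * K <= (t2 - t1) * ((1 + / a) * K)) by (apply Rmult_le_compat_l; nra).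
  rewrite Cmod_opp in *. unfold Cminus. lra.
Qed.

Lemma polar_rect_int_sub_affine F c q (w0 l w : C) : 0 < xlo q <= xhi q ->
  (forall r t, xlo q <= r <= xhi q -> Ccont_at F (polar c r t)) ->
  polar_rect_int F c q = polar_rect_int (fun z => F z - (w0 + l * (z - w)))%C c q.
Proof.
  intros Hq HC. rewrite polar_rect_int_minus, polar_rect_int_affine by
    (lra || (intros; split; [auto | apply Cdiff_at_cont, Cdiff_at_affine])).
  ring.
Qed.

Lemma polar_rect_int_additive F c q : 0 < xlo q -> xlo q < xhi q -> ylo q < yhi q ->
  (forall r t, xlo q <= r <= xhi q -> Ccont_at F (polar c r t)) ->
  polar_rect_int F c q =
    (polar_rect_int F c (quarter q false false) + polar_rect_int F c (quarter q true false)
     + polar_rect_int F c (quarter q false true) + polar_rect_int F c (quarter q true true))%C.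
Proof.
  destruct q as [a b t1 t2]; cbn [xlo xhi ylo yhi]. intros Ha Hab Ht HC.
  unfold polar_rect_int; cbn [xlo xhi ylo yhi quarter].
  rewrite (radial_int_Chasles F c t1 a ((a + b) / 2) b),
          (radial_int_Chasles F c t2 a ((a + b) / 2) b),
          (arc_int_Chasles F c a t1 ((t1 + t2) / 2) t2),
          (arc_int_Chasles F c b t1 ((t1 + t2) / 2) t2)
    by (try intros; try apply HC; lra).
  ring.
Qed.

Lemma Cmod_arc_int_sub_le F c s eta : (forall t, Ccont_at F (polar c s t)) ->
  (forall t, Cmod (F (polar c s t) - F c) <= eta) ->
  Cmod (arc_int F c s 0 (2 * PI) - RtoC (2 * PI) * F c) <= 2 * PI * eta.
Proof.
  intros HC Heta. pose proof PI_RGT_0.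
  assert (Hconst : forall z, Ccont_at (fun _ => F c) z).
  { intros z e He. exists 1. split; [lra|]. intros.
    unfold Cminus. rewrite Cplus_opp_r, Cmod_0. lra. }
  replace (RtoC (2 * PI) * F c)%C with (arc_int (fun _ => F c) c s 0 (2 * PI)).
  2: { unfold arc_int. rewrite RInt_const, scal_C_R. f_equal. f_equal. ring. }
  rewrite <- (arc_int_minus F (fun _ => F c)) by (intro t; split; auto).
  replace (2 * PI * eta) with ((2 * PI - 0) * eta) by ring.
  apply Cmod_CInt_le; [lra | | intros; apply Heta].
  apply (ex_CInt_arc (fun z => F z - F c)%C). intro t. apply Ccont_at_minus; auto.
Qed.

Section PolarGoursat.

Variables (F : C -> C) (c : C) (Rr : R).
Hypothesis F_diff : forall w, Cmod (w - c) < Rr -> Cdiff_at F w.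

Lemma polar_cont r t : 0 <= r < Rr -> Ccont_at F (polar c r t).
Proof. intros Hr. apply Cdiff_at_cont, F_diff. rewrite Cmod_polar_sub_center, Rabs_pos_eq; lra. Qed.

(* Subtracting the first-order Taylor polynomial at [polar c x y], whose integral vanishes,
   leaves an integrand of size [o(width + height)] on a contour of length [O(width + height)]. *)
Lemma polar_rect_int_locally_small q0 x y : 0 < xlo q0 -> xhi q0 < Rr ->
  xlo q0 <= x <= xhi q0 -> ylo q0 <= y <= yhi q0 ->
  forall eta, 0 < eta -> exists rho, 0 < rho /\ forall q, subrect q q0 ->
    xlo q <= x <= xhi q -> ylo q <= y <= yhi q -> width q < rho -> height q < rho ->
    Cmod (polar_rect_int F c q) <= eta * (width q + height q) ^ 2.
Proof.
  intros Hlo Hhi Hx Hy eta Heta.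
  set (w := polar c x y).
  destruct (F_diff w) as [l Hl]; [unfold w; rewrite Cmod_polar_sub_center, Rabs_pos_eq; lra|].
  assert (inv_pos : 0 < / xlo q0) by (apply Rinv_0_lt_compat; lra).
  set (K0 := 2 * (1 + Rr) * (1 + / xlo q0)).
  assert (K0_pos : 0 < K0) by (unfold K0; nra).
  destruct (Hl (eta / K0)) as [rho' [Hrho' Hz]]; [apply Rdiv_lt_0_compat; lra|].
  exists (rho' / (2 * (1 + Rr))). split; [apply Rdiv_lt_0_compat; lra|].
  intros q Hsub Hqx Hqy Hw Hh. unfold subrect in Hsub.
  set (s := width q + height q).
  assert (Hs : (1 + Rr) * s < rho').
  { apply Rmult_lt_reg_r with (/ (2 * (1 + Rr))); [apply Rinv_0_lt_compat; lra|].
    replace ((1 + Rr) * s * / (2 * (1 + Rr))) with (s / 2) by (field; lra).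
    unfold s, Rdiv in *. lra. }
  rewrite (polar_rect_int_sub_affine F c q (F w) l w) by (lra || (intros; apply polar_cont; lra)).
  set (K := eta / K0 * ((1 + Rr) * s)).
  eapply Rle_trans; [apply (polar_rect_int_bound _ c q K); try lra|].
  - intros r t Hr. apply Ccont_at_minus; [apply polar_cont; lra |].
    apply Cdiff_at_cont, Cdiff_at_affine.
  - intros r t Hr Ht.
    assert (Hdist : Cmod (polar c r t - w) <= (1 + Rr) * s)
      by (apply Cmod_polar_sub_polar_rect_le; lra).
    replace (F (polar c r t) - (F w + l * (polar c r t - w)))%C
      with (F (polar c r t) - F w - l * (polar c r t - w))%C by ring.
    eapply Rle_trans; [apply Hz; lra|].
    apply Rmult_le_compat_l; [apply Rlt_le, Rdiv_lt_0_compat|]; lra.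
  - assert (0 <= s) by (unfold s, width, height; lra).
    assert (0 <= K) by (unfold K; apply Rmult_le_pos; [apply Rlt_le, Rdiv_lt_0_compat|]; nra).
    assert (/ xlo q <= / xlo q0) by (apply Rinv_le_contravar; lra).
    assert (2 * s * (1 + / xlo q0) * K = eta * s ^ 2) by (unfold K, K0; field; lra).
    assert (2 * s * (1 + / xlo q) * K <= 2 * s * (1 + / xlo q0) * K)
      by (apply Rmult_le_compat_r; [|apply Rmult_le_compat_l]; lra).
    fold s. lra.
Qed.

Lemma polar_goursat q : 0 < xlo q -> xlo q < xhi q -> xhi q < Rr -> ylo q < yhi q ->
  polar_rect_int F c q = 0%C.
Proof.
  intros Hlo Hq Hhi Ht. apply rect_fun_eq0; auto.
  - intros q' Hsub Hw Hh. unfold subrect in Hsub.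
    apply polar_rect_int_additive; try lra. intros r t Hr. apply polar_cont. lra.
  - intros x y Hx Hy. apply polar_rect_int_locally_small; auto.
Qed.

(* Goursat on the annulus [s <= |z - c| <= r] cut along a radius, whose two sides cancel. *)
Lemma arc_int_radius_indep r s : 0 < s < r -> r < Rr ->
  arc_int F c r 0 (2 * PI) = arc_int F c s 0 (2 * PI).
Proof.
  intros Hs Hr. pose proof PI_RGT_0.
  assert (G := polar_goursat (Rect s r 0 (2 * PI))).
  unfold polar_rect_int in G; cbn [xlo xhi ylo yhi] in G.
  assert (Eradial : radial_int F c 0 s r = radial_int F c (2 * PI) s r).
  { apply (RInt_ext (V := C_R_CompleteNormedModule)). intros x _.
    rewrite <- (Rplus_0_l (2 * PI)), polar_add_2PI. reflexivity. }
  rewrite Eradial in G.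
  assert (Hdiff : (Ci * (arc_int F c r 0 (2 * PI) - arc_int F c s 0 (2 * PI)))%C = 0%C)
    by (rewrite <- G by lra; ring).
  transitivity (arc_int F c s 0 (2 * PI)
                + - Ci * (Ci * (arc_int F c r 0 (2 * PI) - arc_int F c s 0 (2 * PI))))%C.
  - unfold Ci. apply injective_projections; simpl; ring.
  - rewrite Hdiff. ring.
Qed.

(* The circle integrals [arc_int F c s 0 (2 * PI)] do not depend on [s] and tend to
   [2 * PI * F c] as [s] tends to [0]. *)
Lemma maximum_modulus_center r B : 0 < r < Rr ->
  (forall t, 0 <= t <= 2 * PI -> Cmod (F (polar c r t)) <= B) -> Cmod (F c) <= B.
Proof.
  intros Hr HB. pose proof PI_RGT_0.
  apply Rle_plus_epsilon. intros eta Heta.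
  destruct (Cdiff_at_cont F c (F_diff c ltac:(unfold Cminus; rewrite Cplus_opp_r, Cmod_0; lra))
              eta Heta) as [rho [Hrho Hnear]].
  set (s := Rmin (r / 2) (rho / 2)).
  assert (0 < s) by (apply Rmin_pos; lra).
  assert (s <= r / 2) by apply Rmin_l. assert (s <= rho / 2) by apply Rmin_r.
  assert (Hmean : Cmod (arc_int F c s 0 (2 * PI) - RtoC (2 * PI) * F c) <= 2 * PI * eta).
  { apply Cmod_arc_int_sub_le; intro t; [apply polar_cont; lra|].
    apply Rlt_le, Hnear. rewrite Cmod_polar_sub_center, Rabs_pos_eq; lra. }
  assert (Hbound : Cmod (arc_int F c s 0 (2 * PI)) <= 2 * PI * B).
  { rewrite <- (arc_int_radius_indep r s) by lra.
    replace (2 * PI * B) with ((2 * PI - 0) * B) by ring.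
    apply Cmod_CInt_le; [lra | apply ex_CInt_arc; intro t; apply polar_cont; lra | auto]. }
  pose proof (Cmod_triangle (arc_int F c s 0 (2 * PI) - RtoC (2 * PI) * F c)
                            (- arc_int F c s 0 (2 * PI))) as Htri.
  replace (arc_int F c s 0 (2 * PI) - RtoC (2 * PI) * F c + - arc_int F c s 0 (2 * PI))%C
    with (- (RtoC (2 * PI) * F c))%C in Htri by ring.
  rewrite !Cmod_opp, Cmod_mult, Cmod_R, Rabs_pos_eq in Htri by lra.
  nra.
Qed.

End PolarGoursat.

Fixpoint prodR (n : nat) (f : nat -> R) : R :=
  match n with O => 1 | S m => prodR m f * f m end.

Lemma prodR_ext n f g : (forall k, (k < n)%nat -> f k = g k) -> prodR n f = prodR n g.
Proof. induction n; intros H; simpl; auto. rewrite IHn, H; auto. Qed.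

Lemma prodR_S_l n f : prodR (S n) f = f O * prodR n (fun k => f (S k)).
Proof. induction n; simpl in *. ring. rewrite IHn. ring. Qed.

Lemma prodR_nonneg n f : (forall k, (k < n)%nat -> 0 <= f k) -> 0 <= prodR n f.
Proof. induction n; intros H; simpl. lra. apply Rmult_le_pos; auto. Qed.

Lemma prodR_le n f g : (forall k, (k < n)%nat -> 0 <= f k <= g k) -> prodR n f <= prodR n g.
Proof.
  induction n; intros H; simpl; [lra|].
  assert (0 <= prodR n f) by (apply prodR_nonneg; intros; apply H; lia).
  destruct (H n ltac:(lia)). apply Rmult_le_compat; auto.
Qed.

Lemma prodR_mult n f g : prodR n (fun k => f k * g k) = prodR n f * prodR n g.
Proof. induction n; simpl. ring. rewrite IHn. ring. Qed.

Lemma prodR_const n c : prodR n (fun _ => c) = c ^ n.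
Proof. induction n; simpl. ring. rewrite IHn. ring. Qed.

Lemma prodR_pow2 n f : prodR n (fun k => f k ^ 2) = prodR n f ^ 2.
Proof. induction n; simpl in *. ring. rewrite IHn. ring. Qed.

Lemma prodR_rev n f : prodR n (fun k => f (n - S k)%nat) = prodR n f.
Proof.
  induction n as [|m IH]; [reflexivity|].
  rewrite prodR_S_l. simpl prodR at 2. rewrite <- IH.
  replace (S m - 1)%nat with m by lia.
  rewrite (prodR_ext m (fun k => f (S m - S (S k))%nat) (fun k => f (m - S k)%nat))
    by (intros; f_equal; lia).
  ring.
Qed.

Lemma prodR_shift n f : f n = f O -> prodR n (fun k => f (S k)) = prodR n f.
Proof.
  intros H. destruct n as [|m]; [reflexivity|].
  rewrite (prodR_S_l m f). simpl prodR at 1. rewrite H. ring.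
Qed.

Lemma prodR_cyclic_shift n (h : R -> R) t ph q :
  (forall x, h (x + INR n * ph) = h x) ->
  prodR n (fun k => h (t + INR (k + q) * ph)) = prodR n (fun k => h (t + INR k * ph)).
Proof.
  intros Hper. induction q as [|q IH].
  - apply prodR_ext. intros k _. rewrite Nat.add_0_r. reflexivity.
  - rewrite <- IH, <- (prodR_shift n (fun k => h (t + INR (k + q) * ph))).
    + apply prodR_ext. intros k _. do 4 f_equal. lia.
    + rewrite <- (Hper (t + INR (0 + q) * ph)). apply f_equal. rewrite !plus_INR. simpl INR. ring.
Qed.

Lemma prodR_inv_nat n x : prodR n (fun k => x / INR (S k)) = x ^ n / INR (fact n).
Proof.
  induction n as [|n IH]; [simpl; field|].
  change (prodR (S n) _) with (prodR n (fun k => x / INR (S k)) * (x / INR (S n))).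
  rewrite IH, fact_simpl, mult_INR. simpl pow.
  assert (0 < INR (fact n)) by (apply lt_0_INR, lt_O_fact).
  assert (0 < INR (S n)) by (apply lt_0_INR; lia).
  field. lra.
Qed.

Lemma pow_div_fact_le_exp x n : 0 <= x -> x ^ n / INR (fact n) <= exp x.
Proof.
  intros Hx. eapply Rle_trans; [|apply (exp_ge_taylor x n Hx)].
  destruct n as [|m]; simpl; [lra|].
  assert (0 <= sum_f_R0 (fun k => x ^ k / INR (fact k)) m).
  { apply cond_pos_sum. intros k. apply Rdiv_le_0_compat; [apply pow_le; auto|].
    apply lt_0_INR, lt_O_fact. }
  lra.
Qed.

(* Coquelicot's product rule is stated for [AbsRing_NormedModule C_AbsRing], whereas
   [analytic_on_open_disk] uses [C_NormedModule]. *)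
Lemma is_derive_C_NormedModule (f : C -> C) z l :
  is_derive (K := C_AbsRing) (V := C_NormedModule) f z l <->
  is_derive (K := C_AbsRing) (V := AbsRing_NormedModule C_AbsRing) f z l.
Proof.
  split; intros [[Hlin1 Hlin2 [M [HM Hlin3]]] Hd];
    (split; [split; auto; exists M; split; auto | exact Hd]).
Qed.

Lemma ex_derive_Cdiff_at (f : C -> C) z :
  ex_derive (K := C_AbsRing) (V := C_NormedModule) f z -> Cdiff_at f z.
Proof.
  intros [l [_ Hd]]. exists l. intros eta He.
  specialize (Hd z (fun P H => H) (mkposreal eta He)).
  apply (locally_le_locally_norm (K := C_AbsRing) (V := AbsRing_NormedModule C_AbsRing)) in Hd.
  destruct Hd as [rho Hrho]. exists rho. split; [apply cond_pos|].
  intros y Hy. rewrite (Cmult_comm l). exact (Hrho y Hy).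
Qed.

Definition rotate (d th : R) (z : C) : C := (RtoC d + cis th * (z - RtoC d))%C.

Lemma is_derive_rotate d th z :
  is_derive (K := C_AbsRing) (V := AbsRing_NormedModule C_AbsRing) (rotate d th) z (cis th).
Proof.
  pose proof (is_derive_minus (K := C_AbsRing) (V := AbsRing_NormedModule C_AbsRing)
                (fun t => t) (fun _ => RtoC d) z one zero (is_derive_id z) (is_derive_const _ z))
    as Hsub.
  pose proof (is_derive_scal_l (K := C_AbsRing) (V := AbsRing_NormedModule C_AbsRing)
                _ z _ (cis th) Hsub) as Hmul.
  pose proof (is_derive_plus (K := C_AbsRing) (V := AbsRing_NormedModule C_AbsRing)
                (fun _ => RtoC d) _ z _ _ (is_derive_const _ z) Hmul) as Hrot.
  replace (cis th) with
    (plus (zero (G := AbsRing_NormedModule C_AbsRing))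
          (scal (minus (one (K := C_AbsRing)) (zero (G := C_AbsRing))) (cis th))).
  - eapply is_derive_ext; [|exact Hrot]. intro t.
    unfold rotate; simpl. unfold plus, scal, minus, one, zero, opp, mult; simpl.
    apply injective_projections; simpl; ring.
  - unfold cis; simpl. unfold plus, scal, minus, one, zero, opp, mult; simpl.
    apply injective_projections; simpl; ring.
Qed.

Lemma rotate_polar d th r t : rotate d th (polar (RtoC d) r t) = polar (RtoC d) r (t + th).
Proof.
  unfold rotate, polar, cis, RtoC. rewrite cos_plus, sin_plus.
  apply injective_projections; simpl; ring.
Qed.

Lemma rotate_center d th : rotate d th (RtoC d) = RtoC d.
Proof. unfold rotate. ring. Qed.

Fixpoint rotated_prod (g : C -> C) (d ph : R) (n : nat) (z : C) : C :=
  match n with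
  | O => RtoC 1
  | S m => (rotated_prod g d ph m z * g (rotate d (INR m * ph) z))%C
  end.

Lemma rotated_prod_Cdiff_at g d ph n z :
  (forall k, ex_derive (K := C_AbsRing) (V := C_NormedModule) g (rotate d (INR k * ph) z)) ->
  Cdiff_at (rotated_prod g d ph n) z.
Proof.
  intros Hg. apply ex_derive_Cdiff_at.
  cut (ex_derive (K := C_AbsRing) (V := AbsRing_NormedModule C_AbsRing) (rotated_prod g d ph n) z).
  { intros [l Hl]. exists l. apply is_derive_C_NormedModule. exact Hl. }
  induction n as [|m [l1 H1]].
  - exists zero. apply (is_derive_const (K := C_AbsRing)).
  - destruct (Hg m) as [l2 H2].
    assert (H3 := is_derive_comp (K := C_AbsRing) (V := C_NormedModule) g (rotate d (INR m * ph))
                    z l2 _ H2 (is_derive_rotate d (INR m * ph) z)).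
    apply is_derive_C_NormedModule in H3.
    eexists. exact (is_derive_mult (K := C_AbsRing) _ _ z _ _ H1 H3 Cmult_comm).
Qed.

Lemma Cmod_rotated_prod_polar g d ph n r t :
  Cmod (rotated_prod g d ph n (polar (RtoC d) r t))
  = prodR n (fun k => Cmod (g (polar (RtoC d) r (t + INR k * ph)))).
Proof.
  induction n; simpl.
  - apply Cmod_1.
  - rewrite Cmod_mult, IHn, rotate_polar. reflexivity.
Qed.

Lemma Cmod_rotated_prod_center g d ph n :
  Cmod (rotated_prod g d ph n (RtoC d)) = Cmod (g (RtoC d)) ^ n.
Proof.
  induction n; simpl.
  - apply Cmod_1.
  - rewrite Cmod_mult, IHn, rotate_center. ring.
Qed.

Lemma cos_ub_eq b : cos_ub b = 1 - b^2/2 + b^4/24 - b^6/720 + b^8/40320.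
Proof.
  unfold cos_ub, cos_approx, cos_term. cbn [sum_f_R0].
  replace (INR (fact (2*0))) with 1 by (rewrite INR_IZR_INZ; reflexivity).
  replace (INR (fact (2*1))) with 2 by (rewrite INR_IZR_INZ; reflexivity).
  replace (INR (fact (2*2))) with 24 by (rewrite INR_IZR_INZ; reflexivity).
  replace (INR (fact (2*3))) with 720 by (rewrite INR_IZR_INZ; reflexivity).
  replace (INR (fact (2*4))) with 40320 by (rewrite INR_IZR_INZ; reflexivity).
  simpl pow. field.
Qed.

Lemma one_minus_cos_lb b : 0 <= b <= PI -> b ^ 2 / 16 <= 1 - cos b.
Proof.
  intros Hb. pose proof PI_4. pose proof PI2_3_2.
  destruct (Rle_dec b (PI / 2)) as [h|h].
  - destruct (COS b) as [_ H1]; try lra. rewrite cos_ub_eq in H1.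
    replace (b ^ 4) with (b^2 * b^2) in H1 by ring.
    replace (b ^ 6) with (b^2 * b^2 * b^2) in H1 by ring.
    replace (b ^ 8) with (b^2 * b^2 * b^2 * b^2) in H1 by ring.
    assert (y2 : b ^ 2 <= 4) by nra. assert (y0 : 0 <= b ^ 2) by nra.
    set (y := b ^ 2) in *.
    assert (0 <= y * y * y) by (apply Rmult_le_pos; nra).
    assert (y * y * y * y <= 4 * (y * y * y)) by nra.
    assert (y * y <= 4 * y) by nra.
    nra.
  - assert (cos b <= 0) by (apply cos_le_0; lra). nra.
Qed.

Lemma one_minus_cos_lb_sym u al : 0 <= u -> u <= al <= 2 * PI - u -> u ^ 2 / 16 <= 1 - cos al.
Proof.
  intros Hu Hal.
  assert (Hsq : forall b, u <= b -> u ^ 2 / 16 <= b ^ 2 / 16)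
    by (intros; apply Rmult_le_compat_r; [lra | apply pow_incr; lra]).
  destruct (Rle_dec al PI).
  - eapply Rle_trans; [apply (Hsq al); lra | apply one_minus_cos_lb; lra].
  - replace (cos al) with (cos (2 * PI - al)) by (rewrite cos_minus, cos_2PI, sin_2PI; ring).
    eapply Rle_trans; [apply (Hsq (2 * PI - al)); lra | apply one_minus_cos_lb; lra].
Qed.

(* The angle [s + 2 pi k / n] stays at distance at least [pi k (n - k) / n^2] from [2 pi Z]. *)
Lemma one_minus_cos_rotation_ge (n k : nat) (s : R) :
  (1 <= k)%nat -> (k < n)%nat -> Rabs s <= PI / INR n ->
  1 / (2 * ((INR n / INR k) * (INR n / INR (n - k))) ^ 2) <= 1 - cos (s + INR k * (2 * PI / INR n)).
Proof.
  intros Hk Hkn Hs. rewrite minus_INR by lia.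
  assert (K1 : 1 <= INR k) by (apply (le_INR 1); lia).
  assert (KN : INR k + 1 <= INR n) by (rewrite <- S_INR; apply le_INR; lia).
  set (N := INR n) in *. set (K := INR k) in *.
  pose proof PI_4. pose proof PI2_3_2. apply Rabs_le_between in Hs.
  set (u := PI * K * (N - K) / N ^ 2).
  assert (N_pos : 0 < N) by lra.
  replace (1 / (2 * (N / K * (N / (N - K))) ^ 2)) with ((u / PI) ^ 2 / 2)
    by (unfold u; field; repeat split; lra).
  assert (u_nonneg : 0 <= u).
  { unfold u. apply Rdiv_le_0_compat; [|apply pow_lt; lra].
    apply Rmult_le_pos; [apply Rmult_le_pos|]; lra. }
  assert (Hsq : (u / PI) ^ 2 / 2 <= u ^ 2 / 16).
  { replace ((u / PI) ^ 2 / 2) with (u ^ 2 * / (2 * PI ^ 2)) by (field; lra).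
    unfold Rdiv. apply Rmult_le_compat_l; [nra|]. apply Rinv_le_contravar; nra. }
  assert (Hu_le : forall m, K * (N - K) <= m * N -> u <= PI * m / N).
  { intros m Hm. unfold u. apply Rmult_le_reg_r with (N ^ 2); [nra|].
    replace (PI * K * (N - K) / N ^ 2 * N ^ 2) with (PI * (K * (N - K))) by (field; lra).
    replace (PI * m / N * N ^ 2) with (PI * (m * N)) by (field; lra).
    apply Rmult_le_compat_l; lra. }
  assert (Hlo : u <= s + K * (2 * PI / N)).
  { apply Rle_trans with (PI * (2 * K - 1) / N); [apply Hu_le; nra|].
    replace (PI * (2 * K - 1) / N) with (- (PI / N) + K * (2 * PI / N)) by (field; lra). lra. }
  assert (Hhi : s + K * (2 * PI / N) <= 2 * PI - u).
  { assert (u <= PI * (2 * (N - K) - 1) / N) by (apply Hu_le; nra).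
    assert (2 * PI - PI * (2 * (N - K) - 1) / N = PI / N + K * (2 * PI / N))
      by (field; lra).
    lra. }
  pose proof (one_minus_cos_lb_sym u _ u_nonneg (conj Hlo Hhi)). lra.
Qed.

Lemma Cmod_polar_le c r t : 0 <= r -> Cmod (polar c r t) <= Cmod c + r.
Proof.
  intros Hr. replace (polar c r t) with (c + (polar c r t - c))%C by ring.
  eapply Rle_trans; [apply Cmod_triangle|]. rewrite Cmod_polar_sub_center, Rabs_pos_eq; lra.
Qed.

Lemma one_sub_Cmod_polar_ge d r al : 0 < d <= 1/4 -> 1/2 <= r <= 1 - d ->
  d * (1 - d) * (1 - cos al) <= 1 - Cmod (polar (RtoC d) r al).
Proof.
  intros Hd Hr. set (w := polar (RtoC d) r al).
  assert (Hw : Cmod w ^ 2 = d ^ 2 + 2 * d * r * cos al + r ^ 2).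
  { rewrite Cmod2_alt. unfold w, polar, cis, RtoC; simpl.
    pose proof (sin2_cos2 al). unfold Rsqr in *. nra. }
  pose proof (COS_bound al).
  assert (Key : 2 * d * (1 - d) * (1 - cos al) <= 1 - Cmod w ^ 2).
  { rewrite Hw.
    assert (0 <= ((1 - d) - r) * ((1 - d) + r + 2 * d * cos al)) by (apply Rmult_le_pos; nra).
    nra. }
  assert (0 <= 2 * d * (1 - d) * (1 - cos al)) by (apply Rmult_le_pos; nra).
  pose proof (Cmod_ge_0 w). nra.
Qed.

Definition growth_bounded (g : C -> C) (K : R) : Prop :=
  forall gamma, 0 < gamma -> gamma <= 1 -> forall z, Cmod z <= 1 - gamma -> Cmod (g z) <= K / gamma.

Lemma Cmod_le_of_dist_boundary (g : C -> C) K : 0 <= K ->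
  growth_bounded g K ->
  forall w m, 0 < m -> m <= 1 - Cmod w -> Cmod (g w) <= K / m.
Proof.
  intros HK Hg w m Hm Hmw. pose proof (Cmod_ge_0 w).
  eapply Rle_trans; [apply (Hg (1 - Cmod w)); lra|].
  unfold Rdiv. apply Rmult_le_compat_l; [lra|]. apply Rinv_le_contravar; lra.
Qed.

Lemma continuous_on_closed_disk_at (g : C -> C) z : continuous_on_closed_disk g -> closed_disk z ->
  forall eta, 0 < eta -> exists rho, 0 < rho /\
    forall w, closed_disk w -> Cmod (w - z) < rho -> Cmod (g w - g z) < eta.
Proof.
  intros Hg Hz eta He.
  assert (he2 : 0 < eta / 2) by lra.
  destruct (Hg z Hz (fun y => @ball C_UniformSpace (g z) (eta / 2) y))
    as [eps Heps]; [exists (mkposreal (eta / 2) he2); auto|].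
  exists eps. split; [apply cond_pos|]. intros w Hw Hwz.
  pose proof (Rmax_Cmod (w - z)%C) as Hmax.
  pose proof (Rmax_l (Rabs (fst (w - z)%C)) (Rabs (snd (w - z)%C))).
  pose proof (Rmax_r (Rabs (fst (w - z)%C)) (Rabs (snd (w - z)%C))).
  destruct (Heps w) as [e1 e2]; [| exact Hw |].
  { split; [change (Rabs (fst w + - fst z) < eps) | change (Rabs (snd w + - snd z) < eps)];
      simpl in *; lra. }
  change (Rabs (fst (g w) + - fst (g z)) < eta / 2) in e1.
  change (Rabs (snd (g w) + - snd (g z)) < eta / 2) in e2.
  assert (Rmax (Rabs (fst (g w - g z)%C)) (Rabs (snd (g w - g z)%C)) < eta / 2)
    by (apply Rmax_lub_lt; simpl; lra).
  assert (sqrt 2 < 2) by (rewrite <- (sqrt_pow2 2) at 2 by lra; apply sqrt_lt_1; lra).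
  pose proof (Cmod_2Rmax (g w - g z)%C). pose proof (sqrt_pos 2).
  pose proof (Rmax_l (Rabs (fst (g w - g z)%C)) (Rabs (snd (g w - g z)%C))).
  pose proof (Rabs_pos (fst (g w - g z)%C)).
  nra.
Qed.

(* Pointwise continuity along the compact arc is made uniform by a Lebesgue-number argument. *)
Lemma uniformly_small_near_arc (g : C -> C) c R0 th0 eps : 0 <= R0 <= 1 ->
  continuous_on_closed_disk g ->
  (forall th, Rabs th <= th0 -> closed_disk (polar c R0 th) /\ Cmod (g (polar c R0 th)) <= eps) ->
  forall eta, 0 < eta -> exists rho, 0 < rho /\ forall th, Rabs th <= th0 ->
    forall w, closed_disk w -> Cmod (w - polar c R0 th) < rho -> Cmod (g w) < eps + eta.
Proof.
  intros HR0 Hg Harc eta He.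
  set (P := fun th (p : posreal) => Rabs th <= th0 -> forall w, closed_disk w ->
              Cmod (w - polar c R0 th) < p -> Cmod (g w - g (polar c R0 th)) < eta).
  assert (Ex : forall th, exists p : posreal, P th p).
  { intros th. destruct (Rle_dec (Rabs th) th0) as [Hth | Hth].
    - destruct (continuous_on_closed_disk_at g _ Hg (proj1 (Harc th Hth)) eta He)
        as [r [Hr Hw]].
      exists (mkposreal r Hr). intros _. exact Hw.
    - exists (mkposreal 1 Rlt_0_1). intros Hth'. contradiction. }
  set (rf := fun th => proj1_sig (constructive_indefinite_description _ (Ex th))).
  assert (Hrf : forall th, P th (rf th)).
  { intros th. unfold rf. destruct (constructive_indefinite_description _ (Ex th)). auto. }
  assert (Hpos : forall th, 0 < rf th / 2) by (intro th; pose proof (cond_pos (rf th)); lra).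
  destruct (compactness_value_1d (- th0) th0 (fun th => mkposreal (rf th / 2) (Hpos th)))
    as [d0 Hd0].
  exists d0. split; [apply cond_pos|].
  intros th Hth w Hw Hwth. apply NNPP. intro Hneg.
  apply (Hd0 th); [apply Rabs_le_between in Hth; lra|].
  intros [t [Ht [Hxt Hdt]]]. simpl in Hxt, Hdt. apply Hneg.
  assert (Ht' : Rabs t <= th0) by (apply Rabs_le; lra).
  assert (Hwt : Cmod (w - polar c R0 t) < rf t).
  { replace (w - polar c R0 t)%C
      with ((w - polar c R0 th) + (polar c R0 th - polar c R0 t))%C by ring.
    eapply Rle_lt_trans; [apply Cmod_triangle|].
    pose proof (Cmod_polar_sub_angle_le c R0 th t). rewrite Rabs_pos_eq in H by lra.
    pose proof (Rabs_pos (th - t)).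
    assert (R0 * Rabs (th - t) <= Rabs (th - t)) by nra.
    lra. }
  specialize (Hrf t Ht' w Hw Hwt). destruct (Harc t Ht') as [_ Hsmall].
  replace (g w) with ((g w - g (polar c R0 t)) + g (polar c R0 t))%C by ring.
  eapply Rle_lt_trans; [apply Cmod_triangle|]. lra.
Qed.

Lemma exists_shift_near (t ph : R) (n : nat) : 0 < ph -> 0 <= t <= INR n * ph ->
  exists q : nat, Rabs (t + INR q * ph - INR n * ph) <= ph / 2.
Proof.
  intros Hph Ht.
  assert (H : forall m, INR n * ph - ph / 2 <= t + INR m * ph ->
    exists q : nat, Rabs (t + INR q * ph - INR n * ph) <= ph / 2).
  { induction m as [|m IH]; intros Hm.
    - exists 0%nat. apply Rabs_le. simpl in *. lra.
    - destruct (Rle_dec (INR n * ph - ph / 2) (t + INR m * ph)) as [h|h]; [auto|].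
      exists (S m). apply Rabs_le. rewrite S_INR in *. lra. }
  apply (H n). lra.
Qed.

Lemma prodR_recenter n (G : R -> R) t : (0 < n)%nat ->
  (forall y, G (y + 2 * PI) = G y) -> 0 <= t <= 2 * PI ->
  exists s, Rabs s <= PI / INR n /\
    prodR n (fun k => G (t + INR k * (2 * PI / INR n)))
    = prodR n (fun k => G (s + INR k * (2 * PI / INR n))).
Proof.
  intros Hn Hper Ht. pose proof PI_RGT_0.
  assert (N_pos : 0 < INR n) by (apply lt_0_INR; lia).
  set (ph := 2 * PI / INR n).
  assert (E : INR n * ph = 2 * PI) by (unfold ph; field; lra).
  destruct (exists_shift_near t ph n) as [q Hq];
    [unfold ph; apply Rdiv_lt_0_compat; lra | lra |].
  exists (t + INR q * ph - 2 * PI). split.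
  - rewrite E in Hq. replace (PI / INR n) with (ph / 2) by (unfold ph; field; lra). exact Hq.
  - rewrite <- (prodR_cyclic_shift n G t ph q) by (intro y; rewrite E; apply Hper).
    apply prodR_ext. intros k _. rewrite <- (Hper (t + INR q * ph - 2 * PI + INR k * ph)).
    apply f_equal. rewrite plus_INR. ring.
Qed.

Lemma Cmod_rotated_factor_le (g : C -> C) d K n' r s j : 0 < d <= 1/4 -> 0 <= K ->
  growth_bounded g K ->
  1/2 <= r <= 1 - d -> Rabs s <= PI / INR (S n') -> (j < n')%nat ->
  Cmod (g (polar (RtoC d) r (s + INR (S j) * (2 * PI / INR (S n')))))
  <= 3 * K / d * (INR (S n') / INR (S j) * (INR (S n') / INR (S n' - S j))) ^ 2.
Proof.
  intros Hd HK Hgrow Hr Hs Hj.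
  set (Q := INR (S n') / INR (S j) * (INR (S n') / INR (S n' - S j))).
  assert (Q_pos : 0 < Q).
  { unfold Q. apply Rmult_lt_0_compat; apply Rdiv_lt_0_compat; apply lt_0_INR; lia. }
  pose proof (one_minus_cos_rotation_ge (S n') (S j) s ltac:(lia) ltac:(lia) Hs) as Hgap.
  fold Q in Hgap.
  pose proof (one_sub_Cmod_polar_ge d r (s + INR (S j) * (2 * PI / INR (S n'))) Hd Hr) as Hdist.
  set (m := d * (1 - d) * (1 / (2 * Q ^ 2))).
  assert (m_pos : 0 < m)
    by (unfold m; apply Rmult_lt_0_compat; [nra | apply Rdiv_lt_0_compat; nra]).
  eapply Rle_trans; [apply (Cmod_le_of_dist_boundary g K HK Hgrow _ m m_pos)|].
  - eapply Rle_trans; [|exact Hdist]. apply Rmult_le_compat_l; [nra | exact Hgap].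
  - unfold m. replace (K / (d * (1 - d) * (1 / (2 * Q ^ 2)))) with (2 / (1 - d) * (K / d * Q ^ 2))
      by (field; repeat split; nra).
    replace (3 * K / d * Q ^ 2) with (3 * (K / d * Q ^ 2)) by (field; lra).
    apply Rmult_le_compat_r; [|apply Rle_div_l; lra].
    apply Rmult_le_pos; [apply Rdiv_le_0_compat|]; nra.
Qed.

Lemma prodR_gap_weights_le n' :
  prodR n' (fun j => (INR (S n') / INR (S j) * (INR (S n') / INR (S n' - S j))) ^ 2)
  <= exp (INR (S n')) ^ 4.
Proof.
  set (N := INR (S n')). assert (N_pos : 0 < N) by (apply lt_0_INR; lia).
  rewrite prodR_pow2, prodR_mult.
  rewrite (prodR_ext n' (fun j => N / INR (S n' - S j)) (fun j => N / INR (S (n' - S j))))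
    by (intros; do 3 f_equal; lia).
  rewrite (prodR_rev n' (fun j => N / INR (S j))), prodR_inv_nat.
  assert (Fact_pos : 0 < INR (fact n')) by (apply lt_0_INR, lt_O_fact).
  assert (HA : N ^ n' / INR (fact n') = N ^ S n' / INR (fact (S n'))).
  { rewrite fact_simpl, mult_INR. fold N. simpl pow. field. lra. }
  assert (0 <= N ^ n' / INR (fact n')) by (apply Rdiv_le_0_compat; [apply pow_le|]; lra).
  assert (N ^ n' / INR (fact n') <= exp N) by (rewrite HA; apply pow_div_fact_le_exp; lra).
  replace (exp N ^ 4) with ((exp N ^ 2) ^ 2) by ring.
  replace ((N ^ n' / INR (fact n') * (N ^ n' / INR (fact n'))) ^ 2)
    with (((N ^ n' / INR (fact n')) ^ 2) ^ 2) by ring.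
  apply pow_incr. split; [nra|]. apply pow_incr. lra.
Qed.

Lemma prodR_rotated_circle_le (g : C -> C) d K n' r s B0 : 0 < d <= 1/4 -> 0 <= K ->
  growth_bounded g K ->
  1/2 <= r <= 1 - d -> Rabs s <= PI / INR (S n') -> Cmod (g (polar (RtoC d) r s)) <= B0 ->
  prodR (S n') (fun k => Cmod (g (polar (RtoC d) r (s + INR k * (2 * PI / INR (S n'))))))
  <= B0 * ((3 * K / d) ^ n' * exp (INR (S n')) ^ 4).
Proof.
  intros Hd HK Hgrow Hr Hs HB0.
  rewrite prodR_S_l. change (INR 0) with 0. rewrite Rmult_0_l, Rplus_0_r.
  apply Rmult_le_compat;
    [apply Cmod_ge_0 | apply prodR_nonneg; intros; apply Cmod_ge_0 | exact HB0 |].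
  eapply Rle_trans.
  - apply prodR_le. intros j Hj. split; [apply Cmod_ge_0|].
    exact (Cmod_rotated_factor_le g d K n' r s j Hd HK Hgrow Hr Hs Hj).
  - rewrite prodR_mult, prodR_const.
    apply Rmult_le_compat_l; [apply pow_le, Rdiv_le_0_compat; lra | apply prodR_gap_weights_le].
Qed.

Lemma closed_disk_polar d r t : 0 <= d -> 0 <= r -> d + r <= 1 -> closed_disk (polar (RtoC d) r t).
Proof.
  intros Hd Hr Hdr. unfold closed_disk. eapply Rle_trans; [apply Cmod_polar_le; lra|].
  rewrite Cmod_R, Rabs_pos_eq; lra.
Qed.

Lemma rotated_prod_Cdiff_on_disk (g : C -> C) d ph n w : analytic_on_open_disk g -> 0 <= d ->
  Cmod (w - RtoC d) < 1 - d -> Cdiff_at (rotated_prod g d ph n) w.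
Proof.
  intros Han Hd Hw. apply rotated_prod_Cdiff_at. intro k. apply Han.
  unfold rotate. eapply Rle_lt_trans; [apply Cmod_triangle|].
  rewrite Cmod_mult, Cmod_cis, Cmod_R, Rabs_pos_eq by lra. lra.
Qed.

Lemma Cmod_center_pow_le_near_arc (g : C -> C) d K n' B rho : 0 < d <= 1/4 -> 0 <= K -> 0 < rho ->
  analytic_on_open_disk g ->
  growth_bounded g K ->
  (forall th, Rabs th <= PI / INR (S n') -> forall w, closed_disk w ->
     Cmod (w - polar (RtoC d) (1 - d) th) < rho -> Cmod (g w) < B) ->
  Cmod (g (RtoC d)) ^ S n' <= B * ((3 * K / d) ^ n' * exp (INR (S n')) ^ 4).
Proof.
  intros Hd HK Hrho Han Hgrow Hnear.
  set (r := (1 - d) - Rmin (rho / 2) (1 / 4)).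
  assert (0 < Rmin (rho / 2) (1 / 4)) by (apply Rmin_pos; lra).
  assert (Rmin (rho / 2) (1 / 4) <= rho / 2) by apply Rmin_l.
  assert (Rmin (rho / 2) (1 / 4) <= 1 / 4) by apply Rmin_r.
  rewrite <- (Cmod_rotated_prod_center g d (2 * PI / INR (S n'))).
  apply (maximum_modulus_center _ (RtoC d) (1 - d)) with (r := r); [| unfold r; lra |].
  - intros w Hw. apply rotated_prod_Cdiff_on_disk; auto; lra.
  - intros t Ht. rewrite Cmod_rotated_prod_polar.
    destruct (prodR_recenter (S n') (fun y => Cmod (g (polar (RtoC d) r y))) t)
      as [s [Hs ->]]; [lia | intro y; rewrite polar_add_2PI; reflexivity | exact Ht |].
    apply prodR_rotated_circle_le; auto; [unfold r; lra|].
    apply Rlt_le, (Hnear s Hs); [apply closed_disk_polar; unfold r; lra|].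
    rewrite Cmod_polar_sub_radius, Rabs_left1; unfold r; lra.
Qed.

Lemma Cmod_center_pow_le (g : C -> C) d K n' eps : 0 < d <= 1/4 -> 0 <= K ->
  continuous_on_closed_disk g -> analytic_on_open_disk g ->
  growth_bounded g K ->
  (forall th, Rabs th <= PI / INR (S n') -> Cmod (g (polar (RtoC d) (1 - d) th)) <= eps) ->
  Cmod (g (RtoC d)) ^ S n' <= eps * ((3 * K / d) ^ n' * exp (INR (S n')) ^ 4).
Proof.
  intros Hd HK Hcont Han Hgrow Harc.
  set (Pb := (3 * K / d) ^ n' * exp (INR (S n')) ^ 4).
  assert (Pb_nonneg : 0 <= Pb).
  { apply Rmult_le_pos; apply pow_le; [apply Rdiv_le_0_compat | apply Rlt_le, exp_pos]; lra. }
  apply Rle_plus_epsilon. intros e He.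
  set (eta := e / (Pb + 1)).
  assert (eta_pos : 0 < eta) by (apply Rdiv_lt_0_compat; lra).
  assert (eta * Pb <= e).
  { unfold eta. apply Rmult_le_reg_r with (Pb + 1); [lra|].
    replace (e / (Pb + 1) * Pb * (Pb + 1)) with (e * Pb) by (field; lra). nra. }
  destruct (uniformly_small_near_arc g (RtoC d) (1 - d) (PI / INR (S n')) eps ltac:(lra) Hcont)
    with (eta := eta) as [rho [rho_pos Hnear]]; auto.
  { intros th Hth. split; [apply closed_disk_polar; lra | auto]. }
  pose proof (Cmod_center_pow_le_near_arc g d K n' (eps + eta) rho Hd HK rho_pos Han Hgrow Hnear)
    as Hbound.
  fold Pb in Hbound. lra.
Qed.

(* Taking logarithms with [L = ln (1/x) >= ln 4 > 1], the exponent is at most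
   [6 N L - 18 pi L / a], which is negative since [N <= 2 pi / a + 1 < 3 pi / a]. *)
Lemma Rpower_mul_pow_exp_lt_1 x a (n' : nat) : 0 < x <= 1/4 -> 0 < a < PI ->
  INR (S n') <= 2 * PI / a + 1 ->
  Rpower x (18 * PI / a) * ((3 / x) ^ n' * exp (INR (S n')) ^ 4) < 1.
Proof.
  intros Hx Ha HN. set (N := INR (S n')) in *.
  assert (N1 : 1 <= N) by (unfold N; rewrite S_INR; pose proof (pos_INR n'); lra).
  assert (ln4 : 1 < ln 4).
  { rewrite <- (ln_exp 1). apply ln_increasing; [apply exp_pos|]. pose proof exp_le_3. lra. }
  assert (Lx : ln x <= ln (1 / 4)) by (apply ln_le; lra).
  rewrite ln_div, ln_1 in Lx by lra.
  set (L := - ln x).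
  assert (ln3 : 0 < ln 3 < ln 4)
    by (split; [rewrite <- ln_1|]; apply ln_increasing; lra).
  assert (pow_exp : forall y n, 0 < y -> y ^ n = exp (INR n * ln y)).
  { intros y n Hy. induction n; simpl pow; [rewrite Rmult_0_l, exp_0; reflexivity|].
    rewrite IHn, S_INR, Rmult_plus_distr_r, exp_plus, Rmult_1_l, exp_ln by auto. ring. }
  unfold Rpower.
  rewrite (pow_exp (3 / x)), (pow_exp (exp N)) by (apply Rdiv_lt_0_compat || apply exp_pos; lra).
  rewrite ln_div, ln_exp by lra.
  rewrite <- !exp_plus, <- exp_0. apply exp_increasing.
  replace (ln x) with (- L) by (unfold L; ring).
  assert (INR n' * (ln 3 - - L) <= (N - 1) * (2 * L))
    by (replace (INR n') with (N - 1) by (unfold N; rewrite S_INR; ring);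
        apply Rmult_le_compat_l; unfold L; lra).
  assert (N * a <= 2 * PI + a).
  { apply Rmult_le_reg_r with (/ a); [apply Rinv_0_lt_compat; lra|].
    replace (N * a * / a) with N by (field; lra).
    replace ((2 * PI + a) * / a) with (2 * PI / a + 1) by (field; lra). lra. }
  assert (6 * N * L < 18 * PI / a * L).
  { apply Rmult_lt_compat_r; [unfold L; lra|].
    apply Rmult_lt_reg_r with a; [lra|].
    replace (18 * PI / a * a) with (18 * PI) by (field; lra). nra. }
  assert (INR 4 * N <= 4 * N * L) by (simpl; unfold L; nra).
  assert ((N - 1) * (2 * L) <= 2 * N * L) by (unfold L; nra).
  lra.
Qed.

Lemma exists_nat_succ_between y : 0 <= y -> exists n' : nat, y < INR (S n') <= y + 1.
Proof.
  intros Hy. destruct (archimed y) as [Hup1 Hup2].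
  assert (Hpos : (0 < up y)%Z) by (apply lt_IZR; simpl; lra).
  exists (Z.to_nat (up y - 1)).
  rewrite S_INR, INR_IZR_INZ, Z2Nat.id, minus_IZR by lia. simpl. lra.
Qed.

Lemma angle_step_le_half_arc a d N : 0 < a -> 0 <= d < 1 -> 2 * PI / a < N ->
  PI / N <= a / (2 * (1 - d)).
Proof.
  intros Ha Hd HN. pose proof PI_RGT_0.
  assert (0 < N) by (assert (0 < 2 * PI / a) by (apply Rdiv_lt_0_compat; lra); lra).
  assert (2 * PI < N * a).
  { apply Rmult_lt_reg_r with (/ a); [apply Rinv_0_lt_compat; lra|].
    replace (N * a * / a) with N by (field; lra). exact HN. }
  apply Rle_trans with (a / 2).
  - apply Rmult_le_reg_r with (2 * N); [lra|].
    replace (PI / N * (2 * N)) with (2 * PI) by (field; lra).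
    replace (a / 2 * (2 * N)) with (N * a) by field. lra.
  - apply Rmult_le_reg_r with (2 * (1 - d)); [lra|].
    replace (a / (2 * (1 - d)) * (2 * (1 - d))) with a by (field; lra).
    replace (a / 2 * (2 * (1 - d))) with (a * (1 - d)) by field. nra.
Qed.

Lemma Gamma_pt_polar d th : Gamma_pt d th = polar (RtoC d) (1 - d) th.
Proof. unfold Gamma_pt, polar, cis, RtoC. apply injective_projections; simpl; ring. Qed.

Theorem theorem5p5 :
  exists Cst : R, 0 < Cst /\
  forall (delta a lambda M : R) (g : C -> C),
    0 < delta -> delta <= 1 / 4 ->
    0 < a -> a < PI ->
    1 <= lambda -> 1 <= M ->
    continuous_on_closed_disk g ->
    analytic_on_open_disk g ->
    1 <= Cmod (g (RtoC delta)) ->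
    (forall gamma : R, 0 < gamma -> gamma <= 1 ->
       forall z : C, Cmod z <= 1 - gamma -> Cmod (g z) <= lambda * M / gamma) ->
    exists z : C, in_arc_J delta a z /\
      Rpower (delta / (lambda * M)) (Cst / a) <= Cmod (g z).
Proof.
  exists (18 * PI). split; [pose proof PI_RGT_0; lra|].
  intros d a lam M g Hd0 Hd1 Ha0 Ha1 Hl HM Hcont Han Hgd Hgrow.
  set (x := d / (lam * M)).
  assert (Hx : 0 < x <= 1/4).
  { unfold x. split; [apply Rdiv_lt_0_compat; nra|].
    apply Rle_div_l; nra. }
  destruct (exists_nat_succ_between (2 * PI / a)) as [n' [HN1 HN2]].
  { apply Rdiv_le_0_compat; pose proof PI_RGT_0; lra. }
  apply NNPP. intro Hneg.
  assert (Harc : forall th, Rabs th <= PI / INR (S n') ->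
            Cmod (g (polar (RtoC d) (1 - d) th)) <= Rpower x (18 * PI / a)).
  { intros th Hth. apply Rnot_lt_le. intro Hbig. apply Hneg.
    exists (Gamma_pt d th). split; [|rewrite Gamma_pt_polar; lra].
    exists th. split; [|reflexivity]. eapply Rle_trans; [exact Hth|].
    apply angle_step_le_half_arc; lra. }
  pose proof (Cmod_center_pow_le g d (lam * M) n' _ ltac:(lra) ltac:(nra) Hcont Han Hgrow Harc)
    as Hkey.
  replace (3 * (lam * M) / d) with (3 / x) in Hkey by (unfold x; field; split; nra).
  pose proof (Rpower_mul_pow_exp_lt_1 x a n' Hx ltac:(lra) HN2).
  pose proof (pow_R1_Rle _ (S n') Hgd).
  lra.
Qed.
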